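(* Let $\lambda>1$, $\mu>1$. Let $\widetilde G$ be the unique rational function for which there exist real $\tilde\beta,\tilde\alpha,\tilde a,\tilde b$ such that: $\widetilde G=P/Q$ with polynomials $\deg P=3$, $\deg Q=2$; $-1$ and $1$ are poles of $\widetilde G$; $\lim_{z\to\infty}\widetilde G(z)/z>0$; $\tilde\beta<-1<\tilde\alpha<\tilde a<1<\tilde b$; $\widetilde G'(\tilde\beta)=\widetilde G'(\tilde\alpha)=\widetilde G'(\tilde a)=\widetilde G'(\tilde b)=0$; $\widetilde G(\tilde\beta)=-\mu$, $\widetilde G(\tilde b)=\lambda$; $-\widetilde G(\tilde\alpha)=\widetilde G(\tilde a)=1$. Let $\widetilde H=c\,\widetilde G$ where $c>0$ is such that $\lim_{z\to\infty}\widetilde H(z)/z=1$. (i) The system $$ \begin{cases} 2\,(a+\alpha)(3-a\alpha-a-\alpha)(3-a\alpha+a+\alpha)+(\lambda-\mu)(a-\alpha)^3=0,\\ (\lambda+\mu)^2(a-\alpha)^6=4\,(3+a\alpha)^3(1-a\alpha)(2+a+\alpha)(2-a-\alpha) \end{cases} $$ has at least one solution $(\alpha,a)$ with $-1<\alpha<a<1$. (ii) Given any such solution, let $\beta<-1$ and $b>1$ be the solutions of $x^2+(a+\alpha)x+\frac{(a-\alpha)^2}{1-a\alpha}-3=0$, put $A=\frac14(1-\beta)(1-\alpha)(1-a)(1-b)$, $B=\frac14(1+\beta)(1+\alpha)(1+a)(1+b)$, $h=\frac14(a+\alpha)\big(2a\alpha-\frac{(a-\alpha)^2}{1-a\alpha}\big)$,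 $H(z)=h+z+\frac{Az}{1-z}+\frac{Bz}{1+z}$ and $G(z)=H(z)/H(a)$. Then $G=\widetilde G$ and $H=\widetilde H$. *)

From HB Require Import structures.
From mathcomp Require Import all_boot all_order all_algebra.
From mathcomp Require Import all_classical all_reals all_analysis.

Set Implicit Arguments.
Unset Strict Implicit.
Unset Printing Implicit Defensive.

Import Order.TTheory GRing.Theory Num.Theory.
Import numFieldNormedType.Exports.
Local Open Scope classical_set_scope.
Local Open Scope ring_scope.

Section Defs.
Variable R : realType.

Definition ratfun_PQ (P Q : {poly R}) (G : R -> R) : Prop :=
  [/\ size P = 4%N, size Q = 3%N, coprimep P Q &
      forall x, ~~ root Q x -> G x = P.[x] / Q.[x]].

Definition Gtilde_prop (lam mu : R) (G : R -> R) : Prop :=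
  exists P Q : {poly R},
    [/\ ratfun_PQ P Q G,
        root Q (-1) /\ root Q 1,
        (exists l : R, 0 < l /\
           (fun z => G z / z) @ +oo%R --> l /\ (fun z => G z / z) @ -oo%R --> l) &
        exists bt al at_ bt' : R,
          [/\ bt < -1, -1 < al, al < at_, at_ < 1 & 1 < bt'] /\
          [/\ is_derive bt (1:R) G 0, is_derive al (1:R) G 0,
              is_derive at_ (1:R) G 0 & is_derive bt' (1:R) G 0] /\
          [/\ G bt = - mu, G bt' = lam, - G al = 1 & G at_ = 1]].

Definition sys_eq1 (lam mu al a : R) : Prop :=
  2 * (a + al) * (3 - a * al - a - al) * (3 - a * al + a + al)
    + (lam - mu) * (a - al) ^+ 3 = 0.

Definition sys_eq2 (lam mu al a : R) : Prop :=
  (lam + mu) ^+ 2 * (a - al) ^+ 6 =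
    4 * (3 + a * al) ^+ 3 * (1 - a * al) * (2 + a + al) * (2 - a - al).

Definition quadBb (al a x : R) : R :=
  x ^+ 2 + (a + al) * x + (a - al) ^+ 2 / (1 - a * al) - 3.

Definition coefA (bt al a b : R) : R :=
  (1 - bt) * (1 - al) * (1 - a) * (1 - b) / 4.
Definition coefB (bt al a b : R) : R :=
  (1 + bt) * (1 + al) * (1 + a) * (1 + b) / 4.
Definition coefh (al a : R) : R :=
  (a + al) * (2 * a * al - (a - al) ^+ 2 / (1 - a * al)) / 4.

Definition Hfun (bt al a b : R) (z : R) : R :=
  coefh al a + z + coefA bt al a b * z / (1 - z) + coefB bt al a b * z / (1 + z).

Definition Gfun (bt al a b : R) (z : R) : R :=
  Hfun bt al a b z / Hfun bt al a b a.

End Defs.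

From Pilot Require Import Defs.
From HB Require Import structures.
From mathcomp Require Import all_boot all_order all_algebra.
From mathcomp Require Import all_classical all_reals all_analysis.
From mathcomp Require Import ring lra.
Import Order.TTheory GRing.Theory Num.Theory.
Import numFieldNormedType.Exports.
Local Open Scope classical_set_scope.
Local Open Scope ring_scope.

Set Implicit Arguments.
Unset Strict Implicit.
Unset Printing Implicit Defensive.

(* A rational function P/Q with deg P = 3, deg Q = 2 and poles at -1 and 1 is,
   up to a nonzero factor, H(z) = h + z + C z/(1 - z) + D z/(1 + z), and
   (1 - z^2)^2 H'(z) is a monic quartic.  Its four critical points bt < al < a < b
   are then its roots, which fixes C = A, D = B and gives the Vieta relations
   b = -(bt + al + a), bt b = (a - al)^2/(1 - a al) - 3: bt and b are the roots of
   the quadratic of (ii).  For such points H(a) = -H(al) = (a - al)^3/(4 (1 - a al)),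
   while H(b) + H(bt) and (H(b) - H(bt))^2 are explicit in al and a.  Hence the
   normalisations G(al) = -1, G(a) = 1 force G = H/H(a) with the h of (ii), and
   G(bt) = -mu, G(b) = lam become exactly the two equations of the system.
   Conversely, for a solution of the system the same identities show that H/H(a)
   has all the defining properties of \tilde G, so uniqueness identifies them. *)

Ltac neq0 := repeat (apply/andP; split); apply/eqP => ?; lra.

Section HFunction.
Variable R : realType.
Implicit Types (c h l p q C D lam mu bt al a b r x y z : R).

Definition Hform h C D z : R := h + z + C * z / (1 - z) + D * z / (1 + z).

(* [Hder_num C D r = (1 - r^2)^2 * Hform' r] *)
Definition Hder_num C D r : R :=
  (1 - r ^+ 2) ^+ 2 + C * (1 + r) ^+ 2 + D * (1 - r) ^+ 2.

Lemma pm1_neq0 x : x != 1 -> x != -1 ->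
  [/\ 1 - x != 0, 1 + x != 0 & 1 - x ^+ 2 != 0].
Proof.
move=> x1 xm1; rewrite subr_eq0 eq_sym x1 addrC addr_eq0 xm1.
by rewrite subr_eq0 eq_sym sqrf_eq1 negb_or x1.
Qed.

Lemma ratfun_PQ_pm1_Hform P Q (G : R -> R) :
  ratfun_PQ P Q G -> root Q 1 -> root Q (-1) ->
  exists c h C D, c != 0 /\ forall y, y != 1 -> y != -1 -> G y = Hform h C D y / c.
Proof.
case=> sP sQ _ PQ Q1 Qm1.
have lead_neq0 (p : {poly R}) n : size p = n.+1 -> p`_n != 0.
  by move=> sp; rewrite -[n]/(n.+1.-1) -sp -lead_coefE lead_coef_eq0 -size_poly_eq0 sp.
have hornerP y : P.[y] = P`_0 + P`_1 * y + P`_2 * y ^+ 2 + P`_3 * y ^+ 3.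
  by rewrite horner_coef sP !big_ord_recr big_ord0 /= add0r expr0 mulr1 expr1.
have hornerQ y : Q.[y] = Q`_2 * (y ^+ 2 - 1).
  have hornerQ y' : Q.[y'] = Q`_0 + Q`_1 * y' + Q`_2 * y' ^+ 2.
    by rewrite horner_coef sQ !big_ord_recr big_ord0 /= add0r expr0 mulr1 expr1.
  move: Q1 Qm1; rewrite !rootE !hornerQ sqrrN expr1n !mulr1 mulrN1 => /eqP Q1 /eqP Qm1.
  have [-> ->] : Q`_1 = 0 /\ Q`_0 = - Q`_2 by split; lra.
  by ring.
have p3 := lead_neq0 _ _ sP; have q2 := lead_neq0 _ _ sQ.
exists (Q`_2 / P`_3), (- P`_0 / P`_3), ((- P`_1 - P`_3 - P`_0 - P`_2) / (2 * P`_3)),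
  ((- P`_1 - P`_3 + P`_0 + P`_2) / (2 * P`_3)).
split => [|y y1 ym1]; first by rewrite mulf_neq0 ?invr_neq0.
have [y1' ym1' y2] := pm1_neq0 y1 ym1.
have y2' : y ^+ 2 - 1 != 0 by rewrite -oppr_eq0 opprB.
rewrite PQ ?rootE hornerQ ?mulf_neq0 // hornerP /Hform.
by field; rewrite p3 q2 y1' ym1' y2'.
Qed.

Lemma ratfun_PQ_Hform_div h C D c : c != 0 -> C != 0 -> D != 0 ->
  exists P Q, [/\ ratfun_PQ P Q (fun y => Hform h C D y / c), root Q (-1) & root Q 1].
Proof.
move=> c0 C0 D0.
pose P := Poly [:: - h / c; - (1 + C + D) / c; (h - C + D) / c; c^-1].
pose Q := ('X - 1%:P) * ('X - (-1)%:P) : {poly R}.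
have hornerP y : P.[y] = (y ^+ 3 + (h - C + D) * y ^+ 2 - (1 + C + D) * y - h) / c.
  by rewrite horner_Poly /=; field.
have hornerQ y : Q.[y] = y ^+ 2 - 1 by rewrite hornerM !hornerXsubC; ring.
exists P, Q; split; last 2 first.
- by rewrite rootE hornerQ sqrrN expr1n subrr.
- by rewrite rootE hornerQ expr1n subrr.
split.
- by rewrite (PolyK (c := 0)) //= invr_eq0.
- by rewrite size_mul ?polyXsubC_eq0 ?size_XsubC.
- rewrite coprimepMr !coprimep_XsubC !rootE !hornerP.
  by apply/andP; split; rewrite mulf_neq0 ?invr_neq0 //;
    [apply: contra C0 | apply: contra D0] => /eqP E; apply/eqP; lra.
move=> y; rewrite rootE hornerQ => y2.
have y1 : 1 - y != 0 by apply: contra y2; rewrite subr_eq0 => /eqP <-; rewrite expr1n subrr.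
have ym1 : 1 + y != 0.
  by apply: contra y2; rewrite addrC addr_eq0 => /eqP ->; rewrite sqrrN expr1n subrr.
by rewrite hornerP /Hform; field; rewrite c0 y1 ym1 y2.
Qed.

Lemma is_derive_Hform_div h C D c x : x != 1 -> x != -1 ->
  is_derive x (1 : R) (fun y => Hform h C D y / c)
            (Hder_num C D x / (1 - x ^+ 2) ^+ 2 / c).
Proof.
move=> x1 xm1; have [x1' xm1' x2] := pm1_neq0 x1 xm1.
have dl : is_derive x (1 : R) (fun y => (1 - y)^-1) (- (1 - x) ^- 2 *: (-1)).
  apply: is_deriveV => //.
  by have := is_deriveB (is_derive_cst (1 : R) x 1) (is_derive_id x 1); rewrite sub0r.
have dr : is_derive x (1 : R) (fun y => (1 + y)^-1) (- (1 + x) ^- 2 *: 1).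
  apply: is_deriveV => //.
  by have := is_deriveD (is_derive_cst (1 : R) x 1) (is_derive_id x 1); rewrite add0r.
have dC := is_deriveM (is_deriveZ C (is_derive_id x (1 : R))) dl.
have dD := is_deriveM (is_deriveZ D (is_derive_id x (1 : R))) dr.
have dhx := is_deriveD (is_derive_cst h x (1 : R)) (is_derive_id x (1 : R)).
have dH := is_deriveZ c^-1 (is_deriveD (is_deriveD dhx dC) dD).
apply: is_derive_eq (near_eq_is_derive _ dH) _.
  by apply: filterE => y; rewrite /= [RHS]mulrC.
have scaleE (u v : R) : u *: v = u * v by [].
rewrite /= !scaleE /Hder_num [RHS]mulrC; congr (_ * _).
by field; rewrite x1' xm1' x2.
Qed.

Lemma near_neq r c : r != c -> \forall y \near r, y != c.
Proof. by move=> rc; have := open_neq (y := c); rewrite openE; apply. Qed.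

Lemma is_derive0_Hder_num (G : R -> R) c h C D r : c != 0 -> r != 1 -> r != -1 ->
  (forall y, y != 1 -> y != -1 -> G y = Hform h C D y / c) ->
  is_derive r (1 : R) G 0 -> Hder_num C D r = 0.
Proof.
move=> c0 r1 rm1 GH dG; have [_ _ r2] := pm1_neq0 r1 rm1.
have dH : is_derive r (1 : R) (fun y => Hform h C D y / c) 0.
  apply: near_eq_is_derive dG; near=> y; apply: GH; near: y; exact: near_neq.
have [_ D0] := dH; have [_ DH] := is_derive_Hform_div h C D c r1 rm1.
move/eqP: DH; rewrite D0 eq_sym !mulf_eq0 !invr_eq0 (negbTE c0) expf_eq0 /=.
by rewrite (negbTE r2) !orbF => /eqP.
Unshelve. all: by end_near.
Qed.

Lemma cubic_eq0 d3 d2 d1 d0 (xs : seq R) : size xs = 4%N -> uniq xs ->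
  {in xs, forall x, d3 * x ^+ 3 + d2 * x ^+ 2 + d1 * x + d0 = 0} ->
  [/\ d3 = 0, d2 = 0, d1 = 0 & d0 = 0].
Proof.
move=> xs4 xs_uniq xs_roots.
pose p := \poly_(i < 4) [:: d0; d1; d2; d3]`_i.
have p0 : p = 0.
  apply: contraTeq (size_poly 4 _) => /max_poly_roots roots_lt; rewrite -ltnNge.
  rewrite -[X in (X < _)%N]xs4; apply: roots_lt => //.
  apply/allP => x /xs_roots; rewrite rootE horner_poly !big_ord_recr big_ord0 /=.
  by rewrite add0r expr0 expr1 mulr1 => <-; apply/eqP; ring.
have coef0 i : (i < 4)%N -> [:: d0; d1; d2; d3]`_i = 0.
  by move=> i4; have := coef_poly 4 (nth 0 [:: d0; d1; d2; d3]) i; rewrite i4 -/p p0 coef0.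
by split; [exact: (coef0 3%N) | exact: (coef0 2%N) | exact: (coef0 1%N) | exact: (coef0 0%N)].
Qed.

(* [Defs.] is needed because poly.v exports lemmas named [coefA] and [coefB]. *)
Lemma Hder_num_vieta C D bt al a b : bt < al -> al < a -> a < b -> 1 - a * al != 0 ->
  {in [:: bt; al; a; b], forall r, Hder_num C D r = 0} ->
  [/\ b = - (bt + al + a), C = Defs.coefA bt al a b, D = Defs.coefB bt al a b &
      bt * b = (a - al) ^+ 2 / (1 - a * al) - 3].
Proof.
move=> btal ala ab aal_neq0 crit.
pose e1 := bt + al + a + b.
pose e2 := bt * al + bt * a + bt * b + al * a + al * b + a * b.
pose e3 := bt * al * a + bt * al * b + bt * a * b + al * a * b.
pose e4 := bt * al * a * b.
have [E1 E2 E3 E4] : [/\ e1 = 0, C + D - 2 - e2 = 0, 2 * C - 2 * D + e3 = 0 &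
                        1 + C + D - e4 = 0].
  apply: (@cubic_eq0 _ _ _ _ [:: bt; al; a; b]) => //.
    by apply: lt_sorted_uniq; rewrite /= btal ala ab.
  move=> r r_root.
  have -> : e1 * r ^+ 3 + (C + D - 2 - e2) * r ^+ 2 + (2 * C - 2 * D + e3) * r +
      (1 + C + D - e4) = Hder_num C D r - (r - bt) * (r - al) * (r - a) * (r - b).
    by rewrite /Hder_num /e1 /e2 /e3 /e4; ring.
  by rewrite crit //; move: r_root; rewrite !inE => /or4P[] /eqP->; ring.
have hsum : b = - (bt + al + a) by rewrite /e1 in E1; lra.
rewrite /e2 /e3 /e4 in E2 E3 E4; split => //.
- by rewrite /Defs.coefA; lra.
- by rewrite /Defs.coefB; lra.
have prod_eq : bt * b * (1 - a * al) = (a - al) ^+ 2 - 3 * (1 - a * al).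
  have : bt * b * (1 - a * al) - ((a - al) ^+ 2 - 3 * (1 - a * al)) =
      - (bt * al * a * b - (bt * al + bt * a + bt * b + al * a + al * b + a * b) - 3).
    by rewrite hsum; ring.
  by lra.
by apply: (mulIf aal_neq0); rewrite prod_eq; field.
Qed.

Lemma quadBb_vieta al a bt b : 1 - a * al != 0 -> bt != b ->
  quadBb al a bt = 0 -> quadBb al a b = 0 ->
  b = - (bt + al + a) /\ bt * b = (a - al) ^+ 2 / (1 - a * al) - 3.
Proof.
move=> aal_neq0 btb q_bt q_b.
have hsum : bt + b + (a + al) = 0.
  apply: (@mulfI _ (bt - b)); first by rewrite subr_eq0.
  have -> : (bt - b) * (bt + b + (a + al)) = quadBb al a bt - quadBb al a b.
    by rewrite /quadBb; ring.
  by rewrite q_bt q_b subrr mulr0.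
have hb : b = - (bt + al + a) by lra.
by split => //; move: q_bt; rewrite /quadBb hb; nra.
Qed.

Lemma quadratic_roots_beyond_pm1 p q : 1 - p + q < 0 -> 1 + p + q < 0 ->
  exists bt b, [/\ bt < -1, 1 < b, bt ^+ 2 + p * bt + q = 0 & b ^+ 2 + p * b + q = 0].
Proof.
move=> neg_m1 neg_1.
have disc_ge0 : 0 <= p ^+ 2 - 4 * q by nra.
have s_ge0 := sqrtr_ge0 (p ^+ 2 - 4 * q).
have s2 := sqr_sqrtr disc_ge0; set s := Num.sqrt _ in s_ge0 s2.
by exists ((- p - s) / 2), ((- p + s) / 2); split; nra.
Qed.

Lemma quadBb_roots al a : -1 < al -> al < a -> a < 1 ->
  exists bt b, [/\ bt < -1, 1 < b, quadBb al a bt = 0 & quadBb al a b = 0].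
Proof.
move=> hal hala ha.
have aal_gt0 : 0 < 1 - a * al by nra.
set d := (a - al) ^+ 2 / (1 - a * al).
have d_lt1 : d < 2 - (a + al).
  rewrite /d ltr_pdivrMr // -subr_gt0.
  have -> : (2 - (a + al)) * (1 - a * al) - (a - al) ^+ 2 =
            (1 - a) * (1 - al) * (2 + (a + al)) by ring.
  by rewrite !mulr_gt0 //; lra.
have d_ltm1 : d < 2 + (a + al).
  rewrite /d ltr_pdivrMr // -subr_gt0.
  have -> : (2 + (a + al)) * (1 - a * al) - (a - al) ^+ 2 =
            (1 + a) * (1 + al) * (2 - (a + al)) by ring.
  by rewrite !mulr_gt0 //; lra.
have [bt [b [hbt hb q_bt q_b]]] :=
  @quadratic_roots_beyond_pm1 (a + al) (d - 3) ltac:(lra) ltac:(lra).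
by exists bt, b; rewrite /quadBb -/d; split => //; rewrite -addrA.
Qed.

Lemma Hform_div_cvgy h C D : (fun z => Hform h C D z / z) @ +oo --> (1 : R).
Proof.
have inv0 : (fun z : R => z^-1) @ +oo --> (0 : R).
  by apply/gtr0_cvgV0; [exact: nbhs_pinfty_gt | exact: cvg_id].
have n1 : (0 : R) - 1 != 0 by rewrite sub0r oppr_eq0 oner_eq0.
have n2 : (0 : R) + 1 != 0 by rewrite add0r oner_eq0.
have L : (fun z => h * z^-1 + 1 + C * z^-1 * (z^-1 - 1)^-1 + D * z^-1 * (z^-1 + 1)^-1)
    @ +oo --> h * 0 + 1 + C * 0 * (0 - 1)^-1 + D * 0 * (0 + 1)^-1.
  apply: cvgD; [apply: cvgD; [apply: cvgD|] | apply: cvgM; last apply: cvgV].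
  - exact: cvgMl_tmp.
  - exact: cvg_cst.
  - by apply: cvgM; [exact: cvgMl_tmp | apply: cvgV => //; apply: cvgB => //; exact: cvg_cst].
  - exact: cvgMl_tmp.
  - done.
  - by apply: cvgD => //; exact: cvg_cst.
move: L; rewrite !(mulr0, mul0r, addr0, add0r) => L.
apply: cvg_trans L; apply: near_eq_cvg; near=> z.
have z1 : 1 < z by near: z; apply: nbhs_pinfty_gt.
by rewrite /= /Hform; field; neq0.
Unshelve. all: by end_near.
Qed.

(* [Hform h C D (- z) = - Hform (- h) D C z] *)
Lemma Hform_div_cvgNy h C D : (fun z => Hform h C D z / z) @ -oo --> (1 : R).
Proof.
apply/cvgNy_compNP; apply: cvg_trans (Hform_div_cvgy (- h) D C).
apply: near_eq_cvg; near=> z.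
have z1 : 1 < z by near: z; apply: nbhs_pinfty_gt.
by rewrite /= /Hform; field; neq0.
Unshelve. all: by end_near.
Qed.

Lemma eq_off_pm1_cvgy (F G : R -> R) l :
  (forall z, z != 1 -> z != -1 -> F z = G z) -> G @ +oo --> l -> F @ +oo --> l.
Proof.
move=> FG; apply: cvg_trans; apply: near_eq_cvg; near=> z.
have z1 : 1 < z by near: z; apply: nbhs_pinfty_gt.
by rewrite /= FG //; neq0.
Unshelve. all: by end_near.
Qed.

Lemma eq_off_pm1_cvgNy (F G : R -> R) l :
  (forall z, z != 1 -> z != -1 -> F z = G z) -> G @ -oo --> l -> F @ -oo --> l.
Proof.
move=> FG; apply: cvg_trans; apply: near_eq_cvg; near=> z.
have z1 : z < -1 by near: z; apply: nbhs_ninfty_lt.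
by rewrite /= FG //; neq0.
Unshelve. all: by end_near.
Qed.

Section CriticalPoints.
Variables bt al a b : R.
Hypotheses (hbt : bt < -1) (hal : -1 < al) (hala : al < a) (ha : a < 1) (hb : 1 < b).
Hypothesis hsum : b = - (bt + al + a).
Hypothesis hprod : bt * b = (a - al) ^+ 2 / (1 - a * al) - 3.

Let aal_gt0 : 0 < 1 - a * al.
Proof. by move: (hal) (hala) (ha) => ? ? ?; nra. Qed.

(* [lra] and [nra] ignore section hypotheses, so proofs restate them locally. *)
Local Ltac bounds :=
  move: (hbt) (hal) (hala) (ha) (hb) (hsum) (aal_gt0) => ? ? ? ? ? ? ?.

Lemma Hfun_al : Hfun bt al a b al = - Hfun bt al a b a.
Proof.
bounds; apply/eqP; rewrite -addr_eq0 addrC; apply/eqP.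
transitivity (2 * coefh al a + (a + al) * (3 + bt * b - 2 * (a * al)) / 2).
  by rewrite /Hfun /Defs.coefA /Defs.coefB hsum; field; neq0.
by rewrite hprod /coefh; field; neq0.
Qed.

Lemma Hfun_a : Hfun bt al a b a = (a - al) ^+ 3 / (4 * (1 - a * al)).
Proof.
bounds.
transitivity ((Hfun bt al a b a - Hfun bt al a b al) / 2); first by rewrite Hfun_al; field.
transitivity ((a - al) * (3 + bt * b) / 4).
  by rewrite /Hfun /Defs.coefA /Defs.coefB hsum; field; neq0.
by rewrite hprod; field; neq0.
Qed.

Lemma Hfun_a_gt0 : 0 < Hfun bt al a b a.
Proof. by rewrite Hfun_a divr_gt0 ?exprn_gt0 ?subr_gt0 // mulr_gt0. Qed.

Lemma Gfun_a : Gfun bt al a b a = 1.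
Proof. by rewrite /Gfun divff // lt0r_neq0 // Hfun_a_gt0. Qed.

Lemma Gfun_al : Gfun bt al a b al = -1.
Proof. by rewrite /Gfun Hfun_al mulNr divff // lt0r_neq0 // Hfun_a_gt0. Qed.

Lemma Gfun_b_add_bt :
  (Gfun bt al a b b + Gfun bt al a b bt) * (a - al) ^+ 3 =
  - (2 * (a + al) * (3 - a * al - a - al) * (3 - a * al + a + al)).
Proof.
bounds; rewrite /Gfun -mulrDl.
have -> : Hfun bt al a b b + Hfun bt al a b bt =
          (a + al) * (a * al + (a - al) ^+ 2 / (1 - a * al) - 9) / 2.
  transitivity (2 * coefh al a - (a + al) + (a + al) * (2 * (bt * b) - 1 - a * al) / 2).
    by rewrite /Hfun /Defs.coefA /Defs.coefB hsum; field; neq0.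
  by rewrite hprod /coefh; field; neq0.
by rewrite Hfun_a; field; neq0.
Qed.

Lemma Hfun_b_sub_bt : Hfun bt al a b b - Hfun bt al a b bt = (b - bt) * (3 + a * al) / 2.
Proof. by bounds; rewrite /Hfun /Defs.coefA /Defs.coefB; field; neq0. Qed.

Lemma Gfun_b_sub_bt_gt0 : 0 < Gfun bt al a b b - Gfun bt al a b bt.
Proof.
bounds; rewrite /Gfun -mulrBl Hfun_b_sub_bt divr_gt0 ?Hfun_a_gt0 // divr_gt0 //.
by rewrite mulr_gt0 //; nra.
Qed.

Lemma Gfun_b_sub_bt_sqr :
  (Gfun bt al a b b - Gfun bt al a b bt) ^+ 2 * (a - al) ^+ 6 =
  4 * (3 + a * al) ^+ 3 * (1 - a * al) * (2 + a + al) * (2 - a - al).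
Proof.
bounds.
have diff_sqr : (b - bt) ^+ 2 = (a + al) ^+ 2 - 4 * ((a - al) ^+ 2 / (1 - a * al) - 3).
  by rewrite -hprod hsum; ring.
rewrite /Gfun -mulrBl Hfun_b_sub_bt Hfun_a.
transitivity ((b - bt) ^+ 2 * (4 * (1 - a * al) ^+ 2 * (3 + a * al) ^+ 2)).
  by field; neq0.
by rewrite diff_sqr; field; neq0.
Qed.

Lemma sys_eq1_Gfun lam mu :
  sys_eq1 lam mu al a <-> Gfun bt al a b b + Gfun bt al a b bt = lam - mu.
Proof.
bounds; have G_sum := Gfun_b_add_bt; rewrite /sys_eq1; split => E.
- by apply: (@mulIf _ ((a - al) ^+ 3)); [rewrite expf_neq0 //; neq0 | lra].
- by rewrite E in G_sum; lra.
Qed.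

Lemma sys_eq2_Gfun lam mu :
  sys_eq2 lam mu al a <-> (Gfun bt al a b b - Gfun bt al a b bt) ^+ 2 = (lam + mu) ^+ 2.
Proof.
bounds; rewrite /sys_eq2 -Gfun_b_sub_bt_sqr; split => [E|->] //.
by apply: (@mulIf _ ((a - al) ^+ 6)); [rewrite expf_neq0 //; neq0 | rewrite E].
Qed.

Lemma Hder_num_factor z :
  Hder_num (Defs.coefA bt al a b) (Defs.coefB bt al a b) z =
  (z - bt) * (z - al) * (z - a) * (z - b).
Proof.
bounds.
have prod_eq : bt * b * (1 - a * al) = (a + al) ^+ 2 - a * al - 3.
  by rewrite hprod; field; neq0.
transitivity ((z - bt) * (z - al) * (z - a) * (z - b) +
  (z ^+ 2 - 1) * ((a + al) ^+ 2 - a * al - 3 - bt * b * (1 - a * al)) / 2).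
  by rewrite /Hder_num /Defs.coefA /Defs.coefB hsum; field.
by rewrite prod_eq subrr mulr0 mul0r addr0.
Qed.

Lemma coefA_neq0 : Defs.coefA bt al a b != 0.
Proof. by bounds; rewrite /Defs.coefA !mulf_neq0 ?invr_neq0 //; neq0. Qed.

Lemma coefB_neq0 : Defs.coefB bt al a b != 0.
Proof. by bounds; rewrite /Defs.coefB !mulf_neq0 ?invr_neq0 //; neq0. Qed.

Lemma Gfun_Gtilde lam mu : 1 < lam -> 1 < mu ->
  sys_eq1 lam mu al a -> sys_eq2 lam mu al a -> Gtilde_prop lam mu (Gfun bt al a b).
Proof.
bounds => hlam hmu s1 s2.
have Ha_gt0 := Hfun_a_gt0.
have [P [Q [PQ Qm1 Q1]]] :=
  ratfun_PQ_Hform_div (coefh al a) (lt0r_neq0 Ha_gt0) coefA_neq0 coefB_neq0.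
exists P, Q; split => //.
  exists (Hfun bt al a b a)^-1; split; first by rewrite invr_gt0.
  have -> : (fun z => Gfun bt al a b z / z) =
            (fun z => Hform (coefh al a) (Defs.coefA bt al a b) (Defs.coefB bt al a b) z / z
                      * (Hfun bt al a b a)^-1).
    by apply/funext => z; rewrite /Gfun mulrAC.
  by split; rewrite -[X in _ --> X]mul1r; apply: cvgMr_tmp;
    [exact: Hform_div_cvgy | exact: Hform_div_cvgNy].
have crit r : r \in [:: bt; al; a; b] -> is_derive r (1 : R) (Gfun bt al a b) 0.
  move=> r_crit; have [r1 rm1] : r != 1 /\ r != -1.
    by move: r_crit; rewrite !inE => /or4P[] /eqP->; split; neq0.
  apply: is_derive_eq (is_derive_Hform_div _ _ _ _ r1 rm1) _.
  by rewrite Hder_num_factor; move: r_crit; rewrite !inE => /or4P[] /eqP->;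
    rewrite subrr ?(mulr0, mul0r).
have G_sum := (sys_eq1_Gfun lam mu).1 s1.
have G_diff : Gfun bt al a b b - Gfun bt al a b bt = lam + mu.
  apply/eqP; rewrite -(@eqrXn2 _ 2) ?(ltW Gfun_b_sub_bt_gt0) //; last by lra.
  by apply/eqP; exact: (sys_eq2_Gfun lam mu).1 s2.
exists bt, al, a, b; split; [by [] | split].
  by split; apply: crit; rewrite !inE eqxx ?orbT.
by rewrite Gfun_al Gfun_a opprK; split => //; lra.
Qed.

End CriticalPoints.

Lemma Gtilde_Gfun lam mu (G : R -> R) : Gtilde_prop lam mu G ->
  exists bt al a b, [/\ bt < -1, -1 < al, al < a, a < 1 & 1 < b] /\
    [/\ b = - (bt + al + a), bt * b = (a - al) ^+ 2 / (1 - a * al) - 3,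
        G bt = - mu, G b = lam &
        forall y, y != 1 -> y != -1 -> G y = Gfun bt al a b y].
Proof.
case=> P [Q [PQ [Qm1 Q1] _ [bt [al [a [b [[hbt hal hala ha hb]
  [[dbt dal da db] [Gbt Gb Gal Ga]]]]]]]]].
have [c [h [C [D [c0 GH]]]]] := ratfun_PQ_pm1_Hform PQ Q1 Qm1.
have aal_gt0 : 0 < 1 - a * al by nra.
have crit : {in [:: bt; al; a; b], forall r, Hder_num C D r = 0}.
  by move=> r; rewrite !inE => /or4P[] /eqP->;
    apply: (is_derive0_Hder_num c0 _ _ GH) => //; neq0.
have [hsum eC eD hprod] :=
  Hder_num_vieta (lt_trans hbt hal) hala (lt_trans ha hb) (lt0r_neq0 aal_gt0) crit.
have Hal := Hfun_al hbt hal hala ha hb hsum hprod.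
have Ha_gt0 := Hfun_a_gt0 hbt hal hala ha hb hsum hprod.
set d := h - coefh al a.
have GHfun y : y != 1 -> y != -1 -> G y = (Hfun bt al a b y + d) / c.
  by move=> y1 ym1; rewrite GH // /Hfun /Hform eC eD /d; congr (_ / _); ring.
have [d0 ca] : d = 0 /\ c = Hfun bt al a b a.
  rewrite GHfun ?Hal in Gal; [|neq0..]; rewrite GHfun in Ga; [|neq0..].
  move: Gal Ga => /(congr1 ( *%R^~ c)) Gal /(congr1 ( *%R^~ c)) Ga.
  by rewrite mulNr !divfK // mul1r in Gal Ga; split; lra.
exists bt, al, a, b; split => //; split => // y y1 ym1.
by rewrite GHfun // d0 addr0 ca.
Qed.

Lemma Gtilde_sys lam mu (G : R -> R) : Gtilde_prop lam mu G ->
  exists al a, [/\ -1 < al, al < a, a < 1, sys_eq1 lam mu al a & sys_eq2 lam mu al a].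
Proof.
move=> /Gtilde_Gfun [bt [al [a [b [[hbt hal hala ha hb] [hsum hprod Gbt Gb GG]]]]]].
exists al, a; split => //.
  apply/(sys_eq1_Gfun hbt hal hala ha hb hsum hprod).
  by rewrite -!GG ?Gb ?Gbt; [lra | neq0..].
apply/(sys_eq2_Gfun hbt hal hala ha hb hsum hprod).
by rewrite -!GG ?Gb ?Gbt; [congr (_ ^+ 2); lra | neq0..].
Qed.

End HFunction.

Theorem lemma4p3 (R : realType) (lam mu : R) (hlam : 1 < lam) (hmu : 1 < mu)
  (Gt : R -> R) (hGt : Gtilde_prop lam mu Gt)
  (huniq : forall F : R -> R, Gtilde_prop lam mu F ->
             forall x : R, x != 1 -> x != -1 -> F x = Gt x) :
  (* (i) *)
  (exists al a : R, [/\ -1 < al, al < a, a < 1,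
                        sys_eq1 lam mu al a & sys_eq2 lam mu al a]) /\
  (* (ii) *)
  (forall al a : R, -1 < al -> al < a -> a < 1 ->
     sys_eq1 lam mu al a -> sys_eq2 lam mu al a ->
     (exists bt b : R, [/\ bt < -1, 1 < b, quadBb al a bt = 0 & quadBb al a b = 0]) /\
     (forall bt b : R, bt < -1 -> 1 < b -> quadBb al a bt = 0 -> quadBb al a b = 0 ->
        (* G = \widetilde G *)
        (forall x : R, x != 1 -> x != -1 -> Gfun bt al a b x = Gt x) /\
        (* H = \widetilde H = c \widetilde G *)
        (exists c : R, [/\ 0 < c,
            (fun z => c * Gt z / z) @ +oo%R --> (1:R),
            (fun z => c * Gt z / z) @ -oo%R --> (1:R) &
            forall x : R, x != 1 -> x != -1 -> Hfun bt al a b x = c * Gt x]))).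
Proof.
split; first exact: Gtilde_sys hGt.
move=> al a hal hala ha s1 s2; split; first exact: quadBb_roots.
move=> bt b hbt hb q_bt q_b.
have [hsum hprod] : b = - (bt + al + a) /\ bt * b = (a - al) ^+ 2 / (1 - a * al) - 3.
  by apply: quadBb_vieta q_bt q_b; apply/eqP => E; nra.
have eG := huniq _ (Gfun_Gtilde hbt hal hala ha hb hsum hprod hlam hmu s1 s2).
have Ha0 := lt0r_neq0 (Hfun_a_gt0 hbt hal hala ha hb hsum hprod).
have eH x : x != 1 -> x != -1 -> Hfun bt al a b x = Hfun bt al a b a * Gt x.
  by move=> x1 xm1; rewrite -eG // /Gfun mulrC divfK.
split=> //; exists (Hfun bt al a b a); split.
- exact: Hfun_a_gt0.
- by apply: eq_off_pm1_cvgy (Hform_div_cvgy _ _ _) => z z1 zm1; rewrite -eH.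
- by apply: eq_off_pm1_cvgNy (Hform_div_cvgNy _ _ _) => z z1 zm1; rewrite -eH.
- exact: eH.
Qed.
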